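(* Let $\mu,\epsilon,\delta>0$ and let $f:\mathbb{R}^d\to\mathbb{R}$ be differentiable, $\mu$-strongly convex, with $(1/\epsilon)$-Lipschitz gradient and minimizer $x^\ast$. Let $(A_k)_{k\ge0}$ be a nondecreasing sequence of positive numbers, $\tau_k=(A_{k+1}-A_k)/A_{k+1}$, and $E_k=A_k\big(\frac\mu2\|x^\ast-z_k\|^2+f(y_k)-f(x^\ast)\big)$. Suppose that for all $k$ $$x_k=\frac{\tau_k}{1+\tau_k}z_k+\frac1{1+\tau_k}y_k,\qquad z_{k+1}-z_k=\tau_k\Big(x_k-z_k-\frac1\mu\nabla f(x_k)\Big),\qquad y_{k+1}=x_k-\epsilon\nabla f(x_k).$$ Then $$\frac{E_{k+1}-E_k}{\delta}\le\frac{A_{k+1}}{\delta}\Big(\frac{\tau_k^2}{2\mu}-\frac\epsilon2\Big)\|\nabla f(x_k)\|^2+\frac{A_{k+1}}{\delta}\Big(\frac{\tau_k}{2\epsilon}-\frac{\mu}{2\tau_k}\Big)\|x_k-y_k\|^2.$$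
   Context: $\|\cdot\|$ is the Euclidean norm; $\mu$-strong convexity means $f(y)\ge f(x)+\langle\nabla f(x),y-x\rangle+\frac\mu2\|y-x\|^2$. *)

From HB Require Import structures.
From mathcomp Require Import all_boot all_order all_algebra.
From mathcomp Require Import all_classical all_reals all_analysis.
Set Implicit Arguments. Unset Strict Implicit. Unset Printing Implicit Defensive.
Import Order.TTheory GRing.Theory Num.Theory.
Import numFieldNormedType.Exports.
Local Open Scope ring_scope.

Definition dotv (R : realType) (d : nat) (u v : 'rV[R]_d) : R :=
  \sum_(i < d) u ord0 i * v ord0 i.
Definition enorm (R : realType) (d : nat) (u : 'rV[R]_d) : R :=
  Num.sqrt (dotv u u).

Definition is_gradient (R : realType) (d : nat) (f : 'rV[R]_d -> R^o)
  (g : 'rV[R]_d -> 'rV[R]_d) : Prop :=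
  forall x, differentiable f x /\ forall v, 'd f x v = dotv (g x) v.

Definition strongly_convex (R : realType) (d : nat) (mu : R)
  (f : 'rV[R]_d -> R) (g : 'rV[R]_d -> 'rV[R]_d) : Prop :=
  forall x y, f y >= f x + dotv (g x) (y - x) + mu / 2 * enorm (y - x) ^+ 2.

Definition lipschitz_grad (R : realType) (d : nat) (L : R)
  (g : 'rV[R]_d -> 'rV[R]_d) : Prop :=
  forall x y, enorm (g x - g y) <= L * enorm (x - y).

Definition is_minimizer (R : realType) (d : nat) (f : 'rV[R]_d -> R) (xs : 'rV[R]_d) : Prop :=
  forall x, f xs <= f x.

(* Write a = x* - x_k, b = x_k - z_k and G = grad f(x_k).  The iteration gives
   y_k - x_k = tau_k b, x* - z_{k+1} = a + (1 - tau_k) b + (tau_k / mu) G and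
   A_k = (1 - tau_k) A_{k+1}.  After expanding the squared norms, the bound is the
   sum of tau_k times the strong convexity inequality between x_k and x*,
   (1 - tau_k) times the one between x_k and y_k, the descent lemma for the
   gradient step y_{k+1} = x_k - eps G, and tau_k^3 / 2 times mu |b|^2 <= |b|^2 / eps.
   The descent lemma follows from convexity and the Lipschitz bound alone, by
   telescoping the first-order inequality along ever finer subdivisions of the
   segment. *)

From HB Require Import structures.
From mathcomp Require Import all_boot all_order all_algebra.
From mathcomp Require Import all_classical all_reals all_analysis.
From mathcomp Require Import ring lra.
Import Order.TTheory GRing.Theory Num.Theory.
Import numFieldNormedType.Exports.
Local Open Scope ring_scope.


Set Implicit Arguments. Unset Strict Implicit.

Section InnerProduct.
Variables (R : realType) (d : nat).
Implicit Types (u v w : 'rV[R]_d) (a : R).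

Lemma dotvC u v : dotv u v = dotv v u.
Proof. by apply: eq_bigr => i _; rewrite mulrC. Qed.

Lemma dotvDl u v w : dotv (u + v) w = dotv u w + dotv v w.
Proof. by rewrite /dotv -big_split; apply: eq_bigr => i _; rewrite mxE mulrDl. Qed.

Lemma dotvZl a u w : dotv (a *: u) w = a * dotv u w.
Proof. by rewrite /dotv mulr_sumr; apply: eq_bigr => i _; rewrite mxE mulrA. Qed.

Lemma dotvNl u w : dotv (- u) w = - dotv u w.
Proof. by rewrite -scaleN1r dotvZl mulN1r. Qed.

Lemma dotvBl u v w : dotv (u - v) w = dotv u w - dotv v w.
Proof. by rewrite dotvDl dotvNl. Qed.

Lemma dotvDr u v w : dotv w (u + v) = dotv w u + dotv w v.
Proof. by rewrite dotvC dotvDl !(dotvC w). Qed.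

Lemma dotvZr a u w : dotv w (a *: u) = a * dotv w u.
Proof. by rewrite dotvC dotvZl dotvC. Qed.

Lemma dotvNr u w : dotv w (- u) = - dotv w u.
Proof. by rewrite dotvC dotvNl dotvC. Qed.

Lemma dotvBr u v w : dotv w (u - v) = dotv w u - dotv w v.
Proof. by rewrite dotvDr dotvNr. Qed.

Lemma dotv0l w : dotv 0 w = 0.
Proof. by rewrite -(scale0r (0 : 'rV[R]_d)) dotvZl mul0r. Qed.

Lemma dotv0r w : dotv w 0 = 0.
Proof. by rewrite dotvC dotv0l. Qed.

Lemma dotv_ge0 u : 0 <= dotv u u.
Proof. by apply: sumr_ge0 => i _; rewrite -expr2 sqr_ge0. Qed.

Lemma dotv_eq0 u : (dotv u u == 0) = (u == 0).
Proof.
apply/eqP/eqP => [u0|->]; last exact: dotv0l.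
apply/rowP => i; rewrite mxE; apply/eqP; rewrite -sqrf_eq0 expr2; apply/eqP.
by apply: (psumr_eq0P _ u0) => // j _; rewrite -expr2 sqr_ge0.
Qed.

Lemma enorm_ge0 u : 0 <= enorm u.
Proof. exact: sqrtr_ge0. Qed.

Lemma enorm_eq0 u : (enorm u == 0) = (u == 0).
Proof. by rewrite sqrtr_eq0 le_eqVlt ltNge dotv_ge0 orbF dotv_eq0. Qed.

Lemma sqr_enorm u : enorm u ^+ 2 = dotv u u.
Proof. by rewrite sqr_sqrtr // dotv_ge0. Qed.

Lemma enormZ a u : enorm (a *: u) = `|a| * enorm u.
Proof. by rewrite /enorm dotvZl dotvZr mulrA -expr2 sqrtrM ?sqr_ge0 // sqrtr_sqr. Qed.

Lemma dotv_le_enorm u v : dotv u v <= enorm u * enorm v.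
Proof.
have uv_ge0 : 0 <= enorm u * enorm v by rewrite mulr_ge0 ?enorm_ge0.
have key : 0 <= enorm u * enorm v * (enorm u * enorm v - dotv u v).
  have := dotv_ge0 (enorm v *: u - enorm u *: v).
  rewrite !(dotvBl, dotvBr, dotvZl, dotvZr) -!sqr_enorm (dotvC v u); lra.
move: uv_ge0; rewrite le_eqVlt => /predU1P[/esym/eqP|uv_gt0].
  rewrite mulf_eq0 !enorm_eq0 => /orP[]/eqP->;
  by rewrite ?dotv0l ?dotv0r mulr_ge0 ?enorm_ge0.
by rewrite -subr_ge0 -(pmulr_rge0 _ uv_gt0).
Qed.

End InnerProduct.

Lemma ler_add_div_natr (R : realType) (x y c : R) :
  (forall n : nat, x <= y + c / n.+1%:R) -> x <= y.
Proof.
move=> hxy; apply/ler_addgt0Pr => e e_gt0.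
have ce_ge0 : 0 <= `|c| / e by rewrite divr_ge0 // ltW.
set N := Num.Def.archi_bound (`|c| / e).
apply: le_trans (hxy N) _; rewrite lerD2l ler_pdivrMr ?ltr0n //.
apply: le_trans (ler_norm c) _; rewrite -ler_pdivrMl // mulrC.
apply: ltW; apply: lt_le_trans (archi_boundP ce_ge0) _; by rewrite ler_nat.
Qed.

Section GradientInequalities.
Variables (R : realType) (d : nat) (f : 'rV[R]_d -> R) (g : 'rV[R]_d -> 'rV[R]_d).

Lemma lipschitz_grad_dotv L a b w : lipschitz_grad L g ->
  dotv (g a - g b) w <= L * enorm (a - b) * enorm w.
Proof.
move=> hl; apply: le_trans (dotv_le_enorm _ _) _.
by apply: ler_wpM2r; [exact: enorm_ge0|exact: hl].
Qed.

Lemma strongly_convex_subgradient mu : 0 <= mu -> strongly_convex mu f g ->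
  forall a b, f a + dotv (g a) (b - a) <= f b.
Proof.
move=> mu_ge0 hsc a b; apply: le_trans (hsc a b); rewrite lerDl.
by rewrite mulr_ge0 ?sqr_ge0 ?divr_ge0.
Qed.

Lemma strongly_convex_grad_monotone mu : strongly_convex mu f g ->
  forall a b, mu * enorm (a - b) ^+ 2 <= dotv (g a - g b) (a - b).
Proof.
move=> hsc a b; have hab := hsc a b; have hba := hsc b a.
rewrite -[b - a]opprB sqr_enorm !(dotvNl, dotvNr, opprK) in hab.
rewrite sqr_enorm in hba.
rewrite sqr_enorm dotvBl; lra.
Qed.

Lemma strongly_convex_le_lipschitz mu L : strongly_convex mu f g ->
  lipschitz_grad L g -> forall h : 'rV[R]_d, mu * enorm h ^+ 2 <= L * enorm h ^+ 2.
Proof.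
move=> hsc hl h; have := strongly_convex_grad_monotone hsc h 0.
move/le_trans/(_ (lipschitz_grad_dotv h 0 (h - 0) hl)).
by rewrite subr0 -mulrA -expr2.
Qed.

End GradientInequalities.

Section DescentLemma.
Variables (R : realType) (d : nat) (L : R).
Variables (f : 'rV[R]_d -> R) (g : 'rV[R]_d -> 'rV[R]_d).
Hypotheses (hconv : forall a b, f a + dotv (g a) (b - a) <= f b)
  (hl : lipschitz_grad L g).

Lemma descent_subdivision u h s : 0 <= s -> forall m : nat,
  f (u + (m%:R * s) *: h) <=
    f u + m%:R * s * dotv (g u) h + L * s ^+ 2 * enorm h ^+ 2 * (m%:R * m.+1%:R / 2).
Proof.
move=> s_ge0; elim=> [|m IH]; first by rewrite !mul0r scale0r addr0 mulr0 !addr0.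
set p := u + (m%:R * s) *: h; set p' := u + (m.+1%:R * s) *: h.
have step : f p' <= f p + s * dotv (g p') h.
  have := hconv p' p.
  have -> : p - p' = (- s) *: h by apply/rowP => j; rewrite !mxE -natr1; ring.
  rewrite dotvZr; lra.
have lip : s * dotv (g p' - g u) h <= L * s ^+ 2 * enorm h ^+ 2 * m.+1%:R.
  have := ler_wpM2l s_ge0 (lipschitz_grad_dotv p' u h hl).
  have -> : p' - u = (m.+1%:R * s) *: h by rewrite /p' addrAC subrr add0r.
  by rewrite enormZ ger0_norm ?mulr_ge0 ?ler0n //; lra.
rewrite -/p dotvBl in IH lip; rewrite -(natr1 m.+1) -!(natr1 m) in IH lip *; lra.
Qed.

Lemma descent_lemma u h : f (u + h) <= f u + dotv (g u) h + L / 2 * enorm h ^+ 2.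
Proof.
apply: (@ler_add_div_natr _ _ _ (L / 2 * enorm h ^+ 2)) => n.
have n_gt0 : (0 : R) < n.+1%:R by rewrite ltr0n.
have ninv_gt0 : (0 : R) < n.+1%:R^-1 by rewrite invr_gt0.
have := descent_subdivision u h (ltW ninv_gt0) n.+1.
rewrite mulfV ?gt_eqF // scale1r mul1r.
have -> : L * n.+1%:R^-1 ^+ 2 * enorm h ^+ 2 * (n.+1%:R * n.+2%:R / 2) =
    L / 2 * enorm h ^+ 2 + L / 2 * enorm h ^+ 2 / n.+1%:R.
  by rewrite -natr1; field; rewrite gt_eqF.
by rewrite !addrA.
Qed.

End DescentLemma.

Section AcceleratedStep.
Variables (R : realType) (d : nat) (mu eps : R).
Variables (f : 'rV[R]_d -> R) (g : 'rV[R]_d -> 'rV[R]_d).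
Hypotheses (mu_gt0 : 0 < mu) (eps_gt0 : 0 < eps).
Hypotheses (hsc : strongly_convex mu f g) (hl : lipschitz_grad (1 / eps) g).

Lemma gradient_step_decrease x :
  f (x - eps *: g x) <= f x - eps / 2 * enorm (g x) ^+ 2.
Proof.
have hconv := strongly_convex_subgradient (ltW mu_gt0) hsc.
have := descent_lemma hconv hl x (- (eps *: g x)).
rewrite -scaleNr enormZ dotvZr normrN gtr0_norm // -sqr_enorm scaleNr.
have -> : 1 / eps / 2 * (eps * enorm (g x)) ^+ 2 = eps / 2 * enorm (g x) ^+ 2.
  by field; rewrite gt_eqF.
lra.
Qed.

Lemma lyapunov_step_bound t xs x y z : 0 <= t -> t <= 1 ->
  x = (t / (1 + t)) *: z + (1 / (1 + t)) *: y ->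
  mu / 2 * enorm (xs - (z + t *: (x - z - (1 / mu) *: g x))) ^+ 2
    + f (x - eps *: g x) - f xs
  - (1 - t) * (mu / 2 * enorm (xs - z) ^+ 2 + f y - f xs)
  <= (t ^+ 2 / (2 * mu) - eps / 2) * enorm (g x) ^+ 2
   + (t / (2 * eps) - mu / (2 * t)) * enorm (x - y) ^+ 2.
Proof.
move=> t_ge0 t_le1 hx.
have t1_neq0 : 1 + t != 0 by rewrite gt_eqF // ltr_wpDr.
have hy : y - x = t *: (x - z) by apply/rowP => j; rewrite hx !mxE; field.
have hxy : x - y = - (t *: (x - z)) by rewrite -hy opprB.
have hzs : xs - z = (xs - x) + (x - z) by rewrite addrA subrK.
have hz : xs - (z + t *: (x - z - (1 / mu) *: g x))
    = (xs - x) + (1 - t) *: (x - z) + t *: (mu^-1 *: g x).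
  by apply/rowP => j; rewrite !mxE; ring.
have sc_xs := hsc x xs.
have sc_y := hsc x y.
have grad_step := gradient_step_decrease x.
have mu_le := strongly_convex_le_lipschitz hsc hl (x - z).
rewrite hz hzs hxy; rewrite hy in sc_y.
have hG : g x = mu *: (mu^-1 *: g x) by rewrite scalerA mulfV ?gt_eqF // scale1r.
have hGn : enorm (g x) = enorm (mu *: (mu^-1 *: g x)) by rewrite -hG.
have hGd v : dotv (g x) v = dotv (mu *: (mu^-1 *: g x)) v by rewrite -hG.
rewrite hGn in grad_step *; rewrite !hGd in sc_xs sc_y.
move: (xs - x) (x - z) (mu^-1 *: g x) sc_xs sc_y grad_step mu_le.
move=> a b G; rewrite !sqr_enorm !(dotvDl, dotvDr, dotvZl, dotvZr, dotvNl, dotvNr).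
rewrite (dotvC b a) (dotvC G a) (dotvC G b) => sc_xs sc_y grad_step mu_le.
rewrite !(mulrN, opprK).
have -> : (t ^+ 2 / (2 * mu) - eps / 2) * (mu * (mu * dotv G G))
    = t ^+ 2 * mu / 2 * dotv G G - eps / 2 * (mu * (mu * dotv G G)).
  by field; rewrite gt_eqF.
have -> : (t / (2 * eps) - mu / (2 * t)) * (t * (t * dotv b b))
    = t ^+ 3 / 2 * (1 / eps) * dotv b b - mu * t / 2 * dotv b b.
  (* at t = 0 the junk value mu / 0 = 0 is multiplied by 0 *)
  have [->|t_neq0] := eqVneq t 0; first by rewrite !(mul0r, mulr0, expr0n) subr0.
  by field; rewrite t_neq0 gt_eqF.
have t1_ge0 : 0 <= 1 - t by rewrite subr_ge0.
have := ler_wpM2l t_ge0 sc_xs.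
have := ler_wpM2l t1_ge0 sc_y.
have := ler_wpM2l (exprn_ge0 3 t_ge0) mu_le.
lra.
Qed.

End AcceleratedStep.

Theorem corollary1 (R : realType) (d : nat) (mu eps delta : R)
  (f : 'rV[R]_d -> R^o) (g : 'rV[R]_d -> 'rV[R]_d) (xs : 'rV[R]_d)
  (A : nat -> R) (x y z : nat -> 'rV[R]_d) :
  0 < mu -> 0 < eps -> 0 < delta ->
  is_gradient f g ->
  strongly_convex mu f g ->
  lipschitz_grad (1 / eps) g ->
  is_minimizer f xs ->
  (forall k, 0 < A k) ->
  (forall k, A k <= A k.+1) ->
  let tau k := (A k.+1 - A k) / A k.+1 in
  let E k := A k * (mu / 2 * enorm (xs - z k) ^+ 2 + f (y k) - f xs) in
  (forall k, x k = (tau k / (1 + tau k)) *: z k + (1 / (1 + tau k)) *: y k) ->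
  (forall k, z k.+1 - z k = tau k *: (x k - z k - (1 / mu) *: g (x k))) ->
  (forall k, y k.+1 = x k - eps *: g (x k)) ->
  forall k,
    (E k.+1 - E k) / delta <=
      A k.+1 / delta * ((tau k) ^+ 2 / (2 * mu) - eps / 2) * enorm (g (x k)) ^+ 2
    + A k.+1 / delta * (tau k / (2 * eps) - mu / (2 * tau k)) * enorm (x k - y k) ^+ 2.
Proof.
move=> mu_gt0 eps_gt0 delta_gt0 _ hsc hl _ A_gt0 A_le tau E hx hz hy k.
have Ak_gt0 := A_gt0 k; have Ak1_gt0 := A_gt0 k.+1; have Ak_le := A_le k.
have tau_ge0 : 0 <= tau k by rewrite divr_ge0 ?subr_ge0 // ltW.
have tau_le1 : tau k <= 1 by rewrite ler_pdivrMr // mul1r lerBlDr lerDl ltW.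
have hA : A k = (1 - tau k) * A k.+1 by rewrite /tau; field; rewrite gt_eqF.
have hzk : z k.+1 = z k + tau k *: (x k - z k - (1 / mu) *: g (x k)).
  by rewrite -hz addrC subrK.
have step := lyapunov_step_bound mu_gt0 eps_gt0 hsc hl xs tau_ge0 tau_le1 (hx k).
have Adelta_ge0 : 0 <= A k.+1 / delta by rewrite divr_ge0 // ltW.
have := ler_wpM2l Adelta_ge0 step.
rewrite /E hA hy hzk; lra.
Qed.
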